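(* Let $a\neq0$ be a real constant and $\phi(x,z)=(x,\,f(x)g(z+ax),\,z)$ an affine factorable surface of the second kind in $G_3^1$ with $1-(fg')^2>0$. If its Gaussian curvature is a non-zero constant $K_o$, then the surface takes the form $y(x,z)=\left(g_o(z+ax)+\lambda_2\right)\left(\pm\frac{1}{g_o}\tanh\left[\sqrt{K_o}\,x\mp g_o\lambda_1\right]\right)$ for some constants $g_o\in\mathbb{R}\setminus\{0\}$ and $\lambda_1,\lambda_2\in\mathbb{R}$.
   Context: The pseudo-Galilean space $G_3^1$ is $\mathbb{R}^3$ with the scalar product $\langle X,Y\rangle=x_1y_1$ if $x_1\neq0$ or $y_1\neq0$, and $\langle X,Y\rangle=x_2y_2-x_3y_3$ if $x_1=y_1=0$. An affine factorable surface of the second kind is $\phi(x,z)=(x,f(x)g(z+ax),z)$ with $a\neq0$ constant. Here $f'$ denotes $df/dx$ and $g',g''$ denote derivatives of $g$ with respect to its argument $v=z+ax$. The Gaussian curvature is taken to be $K=\dfrac{f'^2g'^2-f''f\,g''g}{(1-(fg')^2)^2}$. *)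

From Stdlib Require Import Reals.
Open Scope R_scope.

(* Gaussian curvature of the affine factorable surface of the second kind
   phi(x,z) = (x, f(x) g(z+ax), z) in G_3^1, as given in the paper:
   K = (f'^2 g'^2 - f'' f g'' g) / (1 - (f g')^2)^2,
   with f, f', f'' evaluated at x and g, g', g'' at v = z + a x.
   df, ddf (resp. dg, ddg) are the first and second derivatives of f (resp. g). *)
Definition gaussK (f df ddf g dg ddg : R -> R) (a x z : R) : R :=
  let v := z + a * x in
  (df x ^ 2 * dg v ^ 2 - ddf x * f x * ddg v * g v)
  / (1 - (f x * dg v) ^ 2) ^ 2.

(* Write [v = z + a x]. Multiplied out, the curvature equation reads
   [A(x) P(v) - B(x) Q(v) - C(x) P(v)^2 = K0] with [P = g'^2], [Q = g'' g],
   [C = K0 f^4]. If [f^2] were constant, [f' = f'' = 0] would force [K0 = 0];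
   so [C] takes two different values, and eliminating [Q] between them leaves a
   nontrivial quadratic equation satisfied by the continuous function [P], which
   must then be constant. Hence [g] is affine with slope [g0 <> 0], the equation
   becomes [(g0 f')^2 = K0 (1 - (g0 f)^2)^2], so [K0 > 0] and, by continuity,
   [g0 f' = +- sqrt K0 (1 - (g0 f)^2)], a Riccati equation solved by [tanh]. *)
From Stdlib Require Import Reals Lra Psatz Classical.
Open Scope R_scope.

Lemma derivable_pt_lim_constant_0 (k : R -> R) c x l :
  (forall y, k y = c) -> derivable_pt_lim k x l -> l = 0.
Proof.
  intros Hk Hd. apply (uniqueness_limite k x); [exact Hd|].
  apply (derivable_pt_lim_ext (fun _ => c)); [intro y; now rewrite Hk|].
  apply derivable_pt_lim_const.
Qed.

Lemma derivable_pt_lim_0_constant (k : R -> R) :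
  (forall x, derivable_pt_lim k x 0) -> forall x, k x = k 0.
Proof.
  intros Hk x.
  apply (null_derivative_1 k (fun y => exist _ 0 (Hk y))); reflexivity.
Qed.

Lemma derivable_pt_lim_continuity (k dk : R -> R) :
  (forall x, derivable_pt_lim k x (dk x)) -> continuity k.
Proof.
  intros Hk x. apply derivable_continuous_pt. exists (dk x). apply Hk.
Qed.

Lemma IVT_midpoint (h : R -> R) u w :
  continuity h -> exists t, h t = (h u + h w) / 2.
Proof.
  intros Hc. set (m := (h u + h w) / 2).
  assert (Hcm : continuity (fun t => h t - m)).
  { apply continuity_minus; [exact Hc|]. apply continuity_const; intros ? ?; reflexivity. }
  assert (Hopp : (h u - m) * (h w - m) <= 0).
  { unfold m. pose proof (pow2_ge_0 (h u - h w)). nra. }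
  destruct (Rle_dec u w) as [Hle|Hle].
  - destruct (IVT_cor _ u w Hcm Hle Hopp) as [t [_ Ht]]. exists t; lra.
  - destruct (IVT_cor _ w u Hcm (Rlt_le _ _ (Rnot_le_lt _ _ Hle))) as [t [_ Ht]];
      [lra|].
    exists t; lra.
Qed.

Lemma continuity_sign_constant (h : R -> R) :
  continuity h -> (forall x, h x <> 0) -> forall x, h x * h 0 > 0.
Proof.
  intros Hc Hn x.
  destruct (Rlt_dec 0 (h x * h 0)) as [|Hneg]; [lra|exfalso].
  destruct (Rle_dec x 0) as [Hle|Hle].
  - destruct (IVT_cor h x 0 Hc Hle) as [t [_ Ht]]; [lra|]. exact (Hn t Ht).
  - destruct (IVT_cor h 0 x Hc (Rlt_le _ _ (Rnot_le_lt _ _ Hle))) as [t [_ Ht]];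
      [lra|].
    exact (Hn t Ht).
Qed.

Lemma quadratic_three_roots al ga de r1 r2 : r1 <> r2 ->
  al * r1 + ga * r1 ^ 2 + de = 0 -> al * r2 + ga * r2 ^ 2 + de = 0 ->
  al * ((r1 + r2) / 2) + ga * ((r1 + r2) / 2) ^ 2 + de = 0 ->
  al = 0 /\ ga = 0 /\ de = 0.
Proof.
  intros Hne E1 E2 E3.
  assert (A1 : al + ga * (r1 + r2) = 0).
  { apply (Rmult_eq_reg_l (r1 - r2)); [nra|lra]. }
  assert (A2 : al + ga * (r1 + (r1 + r2) / 2) = 0).
  { apply (Rmult_eq_reg_l (r1 - (r1 + r2) / 2)); [nra|lra]. }
  assert (G : ga = 0).
  { apply (Rmult_eq_reg_l ((r2 - r1) / 2)); [nra|lra]. }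
  subst ga. assert (al = 0) by lra. subst al. repeat split; lra.
Qed.

Lemma continuity_quadratic_root_constant (P : R -> R) al ga de :
  continuity P -> (al <> 0 \/ ga <> 0 \/ de <> 0) ->
  (forall v, al * P v + ga * P v ^ 2 + de = 0) -> forall v, P v = P 0.
Proof.
  intros Hc Hnz Hq v.
  destruct (Req_dec (P v) (P 0)) as [|Hne]; [assumption|exfalso].
  destruct (IVT_midpoint P v 0 Hc) as [t Ht].
  pose proof (Hq t) as Et. rewrite Ht in Et.
  destruct (quadratic_three_roots al ga de _ _ Hne (Hq v) (Hq 0) Et) as [? [? ?]].
  lra.
Qed.

Lemma sqr_eq_pos_sign (u w : R -> R) :
  continuity u -> (forall x, 0 < w x) -> (forall x, u x ^ 2 = w x ^ 2) ->
  exists s, (s = 1 \/ s = -1) /\ forall x, u x = s * w x.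
Proof.
  intros Hc Hw Hsq.
  assert (Hn : forall x, u x <> 0).
  { intros x Z. specialize (Hsq x). specialize (Hw x). rewrite Z in Hsq. nra. }
  pose proof (continuity_sign_constant u Hc Hn) as Sg.
  destruct (Rlt_dec 0 (u 0)) as [Hp|Hp]; [exists 1|exists (-1)];
    split; auto; intro x;
    specialize (Sg x); specialize (Hsq x); specialize (Hw x); pose proof (Hn 0).
  - assert (0 < u x) by nra. nra.
  - assert (u 0 < 0) by lra. assert (u x < 0) by nra. nra.
Qed.

Lemma tanh_opp y : tanh (- y) = - tanh y.
Proof.
  unfold tanh, sinh, cosh. rewrite Ropp_involutive.
  pose proof (exp_pos y). pose proof (exp_pos (- y)). field. lra.
Qed.

Lemma tanh_sign s y : s = 1 \/ s = -1 -> tanh (s * y) = s * tanh y.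
Proof.
  intros [-> | ->].
  - now rewrite !Rmult_1_l.
  - replace (-1 * y) with (- y) by ring. rewrite tanh_opp. ring.
Qed.

Lemma tanh_eq_of_exp h y :
  1 - h <> 0 -> (1 + h) / (1 - h) = exp (2 * y) -> h = tanh y.
Proof.
  intros Hn Hy.
  assert (E2 : exp y * exp y = (1 + h) / (1 - h)).
  { rewrite <- exp_plus, Hy. f_equal. ring. }
  pose proof (exp_pos y).
  unfold tanh, sinh, cosh. rewrite exp_Ropp.
  replace ((exp y - / exp y) / 2 / ((exp y + / exp y) / 2))
    with ((exp y * exp y - 1) / (exp y * exp y + 1)) by (field; nra).
  rewrite E2. field. split; lra.
Qed.

Lemma riccati_tanh (h : R -> R) m :
  (forall x, derivable_pt_lim h x (m * (1 - h x ^ 2))) ->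
  (forall x, h x ^ 2 < 1) ->
  exists c, forall x, h x = tanh (m * x + c).
Proof.
  intros Hd Hb.
  assert (Hn : forall x, 1 - h x <> 0) by (intro x; specialize (Hb x); nra).
  (* [(1 + h) / (1 - h)] is the exponential of [2 artanh h], which grows like [exp (2 m x)]. *)
  set (w := fun x => (1 + h x) / (1 - h x) * exp (- (2 * m) * x)).
  assert (Hw : forall x, derivable_pt_lim w x 0).
  { intro x.
    pose proof (derivable_pt_lim_div (fun y => 1 + h y) (fun y => 1 - h y) x _ _
      (derivable_pt_lim_plus _ _ x _ _ (derivable_pt_lim_const 1 x) (Hd x))
      (derivable_pt_lim_minus _ _ x _ _ (derivable_pt_lim_const 1 x) (Hd x)) (Hn x)) as Hq.
    pose proof (derivable_pt_lim_comp (fun y => - (2 * m) * y) exp x _ _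
      (derivable_pt_lim_scal _ _ x _ (derivable_pt_lim_id x))
      (derivable_pt_lim_exp _)) as He.
    pose proof (derivable_pt_lim_mult _ _ x _ _ Hq He) as Hm.
    match type of Hm with derivable_pt_lim _ _ ?l => replace 0 with l end.
    - exact Hm.
    - unfold comp, div_fct, Rsqr. simpl. field. exact (Hn x). }
  assert (Cpos : 0 < w 0).
  { unfold w. specialize (Hb 0). pose proof (exp_pos (- (2 * m) * 0)).
    apply Rmult_lt_0_compat; [apply Rdiv_lt_0_compat; nra|lra]. }
  exists (ln (w 0) / 2). intro x.
  apply tanh_eq_of_exp; [exact (Hn x)|].
  replace (2 * (m * x + ln (w 0) / 2)) with (2 * m * x + ln (w 0)) by field.
  rewrite exp_plus, exp_ln by exact Cpos.
  rewrite <- (derivable_pt_lim_0_constant w Hw x). unfold w.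
  transitivity ((1 + h x) / (1 - h x) * exp (2 * m * x + - (2 * m) * x));
    [|rewrite exp_plus; ring].
  replace (2 * m * x + - (2 * m) * x) with 0 by ring. rewrite exp_0. ring.
Qed.

Lemma linear_elimination_coeffs (b1 b2 : R) :
  exists m1 m2, m1 * b1 + m2 * b2 = 0 /\ (m1 + m2 <> 0 \/ (m1 = 1 /\ m2 = -1)).
Proof.
  destruct (Req_dec b1 b2) as [->|Hne].
  - exists 1, (-1). split; [ring|now right].
  - exists b2, (- b1). split; [ring|left; lra].
Qed.

Section FactorableSurface.

Variables (K0 : R) (f df ddf g dg ddg : R -> R).
Hypothesis hdf : forall x, derivable_pt_lim f x (df x).
Hypothesis hddf : forall x, derivable_pt_lim df x (ddf x).
Hypothesis hdg : forall v, derivable_pt_lim g v (dg v).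
Hypothesis hddg : forall v, derivable_pt_lim dg v (ddg v).
Hypothesis hreg : forall x v, 1 - (f x * dg v) ^ 2 > 0.
Hypothesis hK0 : K0 <> 0.
Hypothesis hcurv : forall x v,
  df x ^ 2 * dg v ^ 2 - ddf x * f x * ddg v * g v = K0 * (1 - (f x * dg v) ^ 2) ^ 2.

Lemma f_sqr_nonconstant : exists x1, f x1 ^ 2 <> f 0 ^ 2.
Proof.
  apply not_all_not_ex. intro Hall.
  assert (Hf : forall x, f x = f 0).
  { apply (continuity_quadratic_root_constant f 0 1 (- f 0 ^ 2)
      (derivable_pt_lim_continuity f df hdf)); [right; left; lra|].
    intro x. specialize (Hall x). apply NNPP in Hall. lra. }
  assert (Hdf0 : forall x, df x = 0).
  { intro x. exact (derivable_pt_lim_constant_0 f (f 0) x _ Hf (hdf x)). }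
  assert (Hddf0 : ddf 0 = 0).
  { exact (derivable_pt_lim_constant_0 df 0 0 _ Hdf0 (hddf 0)). }
  pose proof (hcurv 0 0) as E. pose proof (hreg 0 0).
  rewrite Hdf0, Hddf0 in E.
  assert (0 < (1 - (f 0 * dg 0) ^ 2) ^ 2) by (apply pow_lt; lra).
  nra.
Qed.

Lemma dg_sqr_constant : forall v, dg v ^ 2 = dg 0 ^ 2.
Proof.
  set (P := fun v => dg v ^ 2).
  set (A := fun x => df x ^ 2 + 2 * K0 * f x ^ 2).
  set (B := fun x => ddf x * f x).
  set (C := fun x => K0 * (f x ^ 2) ^ 2).
  assert (HE : forall x v, A x * P v - B x * (ddg v * g v) - C x * P v ^ 2 - K0 = 0).
  { intros x v. unfold A, B, C, P. pose proof (hcurv x v). nra. }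
  assert (HPc : continuity P).
  { intro v. apply derivable_continuous_pt.
    exists (INR 2 * dg v ^ (2 - 1) * ddg v).
    apply (derivable_pt_lim_comp dg (fun y => y ^ 2));
      [apply hddg|apply derivable_pt_lim_pow]. }
  destruct f_sqr_nonconstant as [x1 Hx1].
  assert (HC : C x1 <> C 0).
  { unfold C. intro HCe. apply Hx1.
    assert ((f x1 ^ 2) ^ 2 = (f 0 ^ 2) ^ 2) by (apply (Rmult_eq_reg_l K0); auto).
    pose proof (pow2_ge_0 (f x1)). pose proof (pow2_ge_0 (f 0)). nra. }
  destruct (linear_elimination_coeffs (B x1) (B 0)) as [m1 [m2 [Hm Hnz]]].
  apply (continuity_quadratic_root_constant P (m1 * A x1 + m2 * A 0)
           (- (m1 * C x1 + m2 * C 0)) (- (m1 + m2) * K0) HPc).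
  - destruct Hnz as [Hs|[-> ->]].
    + right; right. intro Z. apply Rmult_integral in Z. destruct Z; [lra|contradiction].
    + right; left. lra.
  - intro v.
    transitivity (m1 * (A x1 * P v - B x1 * (ddg v * g v) - C x1 * P v ^ 2 - K0)
                  + m2 * (A 0 * P v - B 0 * (ddg v * g v) - C 0 * P v ^ 2 - K0)
                  + (m1 * B x1 + m2 * B 0) * (ddg v * g v)); [ring|].
    rewrite !HE, Hm. ring.
Qed.

Lemma dg_constant : forall v, dg v = dg 0.
Proof.
  apply (continuity_quadratic_root_constant dg 0 1 (- dg 0 ^ 2)
           (derivable_pt_lim_continuity dg ddg hddg)); [right; left; lra|].
  intro v. rewrite dg_sqr_constant. ring.
Qed.

Lemma ddg_zero : forall v, ddg v = 0.
Proof.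
  intro v. exact (derivable_pt_lim_constant_0 dg (dg 0) v _ dg_constant (hddg v)).
Qed.

Lemma g_affine : forall v, g v = dg 0 * v + g 0.
Proof.
  assert (Hk : forall v, derivable_pt_lim (fun y => g y - dg 0 * y) v 0).
  { intro v.
    pose proof (derivable_pt_lim_minus g (fun y => dg 0 * y) v _ _ (hdg v)
      (derivable_pt_lim_scal _ _ v _ (derivable_pt_lim_id v))) as D.
    rewrite (dg_constant v) in D. replace (dg 0 - dg 0 * 1) with 0 in D by ring.
    exact D. }
  intro v. pose proof (derivable_pt_lim_0_constant _ Hk v) as Hv. simpl in Hv. lra.
Qed.

Let g0 := dg 0.

Lemma f_slope_eq : forall x, (g0 * df x) ^ 2 = K0 * (1 - (g0 * f x) ^ 2) ^ 2.
Proof.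
  intro x. pose proof (hcurv x 0) as E. rewrite ddg_zero in E.
  fold g0 in E. replace ((g0 * f x) ^ 2) with ((f x * g0) ^ 2) by ring.
  rewrite <- E. ring.
Qed.

Lemma g0_f_sqr_lt_1 : forall x, (g0 * f x) ^ 2 < 1.
Proof. intro x. pose proof (hreg x 0) as Hx. fold g0 in Hx. nra. Qed.

Lemma K0_pos : 0 < K0.
Proof.
  pose proof (f_slope_eq 0). pose proof (g0_f_sqr_lt_1 0).
  assert (0 < (1 - (g0 * f 0) ^ 2) ^ 2) by (apply pow_lt; lra).
  destruct (Rlt_dec 0 K0); [assumption|]. pose proof (pow2_ge_0 (g0 * df 0)).
  assert (K0 < 0) by lra. nra.
Qed.

Lemma g0_neq0 : g0 <> 0.
Proof.
  intro Z. pose proof (f_slope_eq 0) as E. rewrite Z in E. pose proof K0_pos. nra.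
Qed.

Lemma g0_f_tanh : exists s c, (s = 1 \/ s = -1) /\
  forall x, g0 * f x = tanh (s * sqrt K0 * x + c).
Proof.
  set (k := sqrt K0).
  assert (Hk : k * k = K0) by (apply sqrt_sqrt; pose proof K0_pos; lra).
  assert (Hkpos : 0 < k) by (apply sqrt_lt_R0, K0_pos).
  destruct (sqr_eq_pos_sign (fun x => g0 * df x) (fun x => k * (1 - (g0 * f x) ^ 2)))
    as [s [Hs Hslope]].
  - apply continuity_scal, (derivable_pt_lim_continuity df ddf hddf).
  - intro x. pose proof (g0_f_sqr_lt_1 x). apply Rmult_lt_0_compat; lra.
  - intro x. rewrite f_slope_eq, <- Hk. ring.
  - destruct (riccati_tanh (fun x => g0 * f x) (s * k)) as [c Hc].
    + intro x. replace (s * k * (1 - (g0 * f x) ^ 2)) with (g0 * df x)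
        by (rewrite Hslope; ring).
      apply derivable_pt_lim_scal, hdf.
    + exact g0_f_sqr_lt_1.
    + exists s, c. split; [exact Hs|exact Hc].
Qed.

Lemma factorable_surface_form : exists go l1 l2 s, go <> 0 /\ (s = 1 \/ s = -1) /\
  forall x v, f x * g v = (go * v + l2) * (s * / go * tanh (sqrt K0 * x - s * go * l1)).
Proof.
  destruct g0_f_tanh as [s [c [Hs Hc]]].
  exists g0, (- c / g0), (g 0), s. split; [exact g0_neq0|]. split; [exact Hs|].
  intros x v. pose proof g0_neq0.
  rewrite g_affine. fold g0.
  replace (f x) with (tanh (s * sqrt K0 * x + c) / g0) by (rewrite <- Hc; field; auto).
  replace (sqrt K0 * x - s * g0 * (- c / g0)) with (sqrt K0 * x + s * c) by (field; auto).
  replace (s * sqrt K0 * x + c) with (s * (sqrt K0 * x + s * c))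
    by (destruct Hs; subst; ring).
  rewrite tanh_sign by exact Hs. field. exact g0_neq0.
Qed.

End FactorableSurface.

Lemma shear_forall (P : R -> R -> Prop) a :
  (forall x z, P x (z + a * x)) -> forall x v, P x v.
Proof.
  intros H x v. replace v with (v - a * x + a * x) by ring. apply H.
Qed.

Theorem mainTheorem3
  (a K0 : R) (f df ddf g dg ddg : R -> R)
  (ha : a <> 0)
  (hdf : forall x, derivable_pt_lim f x (df x))
  (hddf : forall x, derivable_pt_lim df x (ddf x))
  (hdg : forall v, derivable_pt_lim g v (dg v))
  (hddg : forall v, derivable_pt_lim dg v (ddg v))
  (hreg : forall x z, 1 - (f x * dg (z + a * x)) ^ 2 > 0)
  (hK0 : K0 <> 0)
  (hK : forall x z, gaussK f df ddf g dg ddg a x z = K0) :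
  exists (go l1 l2 s : R), go <> 0 /\ (s = 1 \/ s = -1) /\
    forall x z,
      f x * g (z + a * x)
      = (go * (z + a * x) + l2) * (s * / go * tanh (sqrt K0 * x - s * go * l1)).
Proof.
  pose proof (shear_forall (fun x v => 1 - (f x * dg v) ^ 2 > 0) a hreg) as hreg'.
  assert (hcurv : forall x v, df x ^ 2 * dg v ^ 2 - ddf x * f x * ddg v * g v
                              = K0 * (1 - (f x * dg v) ^ 2) ^ 2).
  { intros x v.
    pose proof (shear_forall (fun x v => (df x ^ 2 * dg v ^ 2 - ddf x * f x * ddg v * g v)
                  / (1 - (f x * dg v) ^ 2) ^ 2 = K0) a hK x v) as Hxv.
    pose proof (hreg' x v). simpl in Hxv. rewrite <- Hxv. field. lra. }
  destruct (factorable_surface_form K0 f df ddf g dg ddg hdf hddf hdg hddg hreg' hK0 hcurv)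
    as [go [l1 [l2 [s [Hgo [Hs Hform]]]]]].
  exists go, l1, l2, s. split; [exact Hgo|]. split; [exact Hs|].
  intros x z. apply Hform.
Qed.
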